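(* For every positive integer $k$, $$2^k-1\le a_k\le 2^{k+n_k}-2^{\mu_2(k)}.$$
   Context: For a positive integer $k$, $a_k$ denotes the smallest positive multiple of $k$ whose sum of binary (base $2$) digits equals $k$. $n_k=\lceil\log_2 k\rceil$ and $\mu_2(k)$ is the largest $\alpha\ge0$ with $2^\alpha\mid k$. *)

From mathcomp Require Import all_boot.

(* Sum of the binary digits of n: bit i of n is odd (n %/ 2^i); bits at
   positions >= n are all zero since n < 2^n. *)
Definition binsum (n : nat) : nat := \sum_(i < n.+1) odd (n %/ 2 ^ i).

Definition is_ak (k a : nat) : Prop :=
  [/\ 0 < a, k %| a, binsum a = k &
      forall b, 0 < b -> k %| b -> binsum b = k -> a <= b].

Definition nk (k : nat) : nat := up_log 2 k.

Definition mu2 (k : nat) : nat := logn 2 k.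

From mathcomp Require Import all_boot zify.

(* Work with the truncated digit sum  bits N x  (the first N binary digits
   of x); it satisfies the recursion  bits N.+1 x = odd x + bits N x./2  and
   agrees with binsum as soon as x < 2^N.  Two facts about it drive the proof:
   - a number with digit sum s is at least 2^s - 1 (bits_lower), which gives
     the lower bound;
   - the digits of  y * 2^k + z  (z < 2^k) are those of z followed by those of
     y (bits_shift), and the k-digit complement 2^k - 1 - y of y has digit sum
     k - bits k y (bits_complement).
   Consequently k * (2^k - 1) = (k - 1) * 2^k + (2^k - 1 - (k - 1)) has digit
   sum (k - 1) + bits k (complement of k - 1) = k, so it is a candidate: a_k
   exists (least element) and a_k <= k * 2^k - k.  Finally k <= 2^n_k and
   2^mu_2(k) <= k turn this into the upper bound 2^(k + n_k) - 2^mu_2(k). *)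

Definition bits (N x : nat) : nat := \sum_(i < N) odd (x %/ 2 ^ i).

Lemma bits0 (x : nat) : bits 0 x = 0.
Proof. by rewrite /bits big_ord0. Qed.

Lemma bitsS (N x : nat) : bits N.+1 x = odd x + bits N x./2.
Proof.
rewrite /bits big_ord_recl expn0 divn1; congr (_ + _).
by apply: eq_bigr => i _; rewrite /bump /= expnS divnMA divn2.
Qed.

Lemma bits_of0 (N : nat) : bits N 0 = 0.
Proof. by rewrite /bits big1 // => i _; rewrite div0n. Qed.

Lemma half_ltn_exp2 [x k : nat] : x < 2 ^ k.+1 -> x./2 < 2 ^ k.
Proof. by rewrite ltn_half_double -mul2n -expnS. Qed.

Lemma bits_indep (N M x : nat) : x < 2 ^ N -> x < 2 ^ M -> bits N x = bits M x.
Proof.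
elim: N M x => [|N IH] [|M] x //.
- by rewrite expn0 ltnS leqn0 => /eqP -> _; rewrite bits0 bits_of0.
- by rewrite expn0 ltnS leqn0 => _ /eqP ->; rewrite bits0 bits_of0.
- by move=> ltxN ltxM; rewrite !bitsS (IH M) ?half_ltn_exp2.
Qed.

Lemma binsum_bits [N x : nat] : x < 2 ^ N -> binsum x = bits N x.
Proof.
move=> ltxN; apply: bits_indep => //.
by rewrite (ltn_trans (ltn_expl x (isT : 1 < 2))) // ltn_exp2l.
Qed.

Lemma bits_shift (k N y z : nat) :
  z < 2 ^ k -> bits (k + N) (y * 2 ^ k + z) = bits k z + bits N y.
Proof.
elim: k y z => [|k IH] y z.
  by rewrite expn0 ltnS leqn0 => /eqP ->; rewrite bits0 muln1 addn0.
move=> ltzk; rewrite addSn !bitsS -addnA; congr (_ + _).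
  by rewrite expnS mulnCA oddD oddM.
rewrite -[z in LHS]odd_double_half expnS mulnCA mul2n addnCA -doubleD.
by rewrite half_bit_double IH ?half_ltn_exp2.
Qed.

(* Complementing the k lowest digits: every digit is 1 in y or in 2^k-1-y. *)
Lemma bits_complement (k y : nat) :
  y < 2 ^ k -> bits k (2 ^ k - 1 - y) + bits k y = k.
Proof.
elim: k y => [|k IH] y; first by rewrite !bits0.
move=> ltyk; have lthalf := half_ltn_exp2 ltyk.
have compl_half : 2 ^ k.+1 - 1 - y = ~~ odd y + (2 ^ k - 1 - y./2).*2.
  move: ltyk lthalf; rewrite -[y in _ - y]odd_double_half expnS.
  by case: (odd y) => /=; lia.
rewrite !bitsS compl_half half_bit_double oddD odd_double addbF addnACA IH //.
by case: (odd y).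
Qed.

Lemma bits_lower (N x : nat) : 2 ^ bits N x <= x.+1.
Proof.
elim: N x => [|N IH] x; first by rewrite bits0.
rewrite bitsS expnD; have := IH x./2; have := odd_double_half x.
by case: (odd x); rewrite /= ?expn1 ?expn0 -mul2n; lia.
Qed.

Lemma binsum_candidate [k : nat] : 0 < k -> binsum (k * (2 ^ k - 1)) = k.
Proof.
move=> k_gt0; have pow_gt0 : 0 < 2 ^ k by rewrite expn_gt0.
have ltk : k - 1 < 2 ^ k by rewrite (leq_ltn_trans (leq_subr 1 k)) // ltn_expl.
have pow_le : 2 ^ k <= k * 2 ^ k by rewrite leq_pmull.
have split_digits : k * (2 ^ k - 1) = (k - 1) * 2 ^ k + (2 ^ k - 1 - (k - 1)).
  by rewrite mulnBr muln1 mulnBl mul1n; lia.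
have small : k * (2 ^ k - 1) < 2 ^ (k + k).
  rewrite expnD (leq_trans (_ : _ < k * 2 ^ k)) //.
    by rewrite ltn_pmul2l // ltn_subrL pow_gt0.
  by rewrite leq_mul2r (ltnW (ltn_expl k (isT : 1 < 2))) orbT.
rewrite (binsum_bits small) split_digits bits_shift ?bits_complement //.
by rewrite (leq_ltn_trans (leq_subr _ _)) // ltn_subrL pow_gt0.
Qed.

Lemma binsum_lower (k a : nat) : binsum a = k -> 2 ^ k - 1 <= a.
Proof.
by move=> <-; rewrite leq_subLR add1n; exact: bits_lower a.+1 a.
Qed.

Lemma candidate_upper [k : nat] : 0 < k ->
  k * (2 ^ k - 1) <= 2 ^ (k + nk k) - 2 ^ mu2 k.
Proof.
move=> k_gt0.
have k_le : k <= 2 ^ nk k by apply: up_logP.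
have val_le : 2 ^ mu2 k <= k by apply: dvdn_leq => //; apply: pfactor_dvdnn.
have prod_le : k * 2 ^ k <= 2 ^ (k + nk k).
  by rewrite expnD mulnC leq_mul2l k_le orbT.
rewrite mulnBr muln1; lia.
Qed.

Theorem mainTheorem3 (k : nat) : 0 < k ->
  (exists a, is_ak k a) /\
  (forall a, is_ak k a -> 2 ^ k - 1 <= a <= 2 ^ (k + nk k) - 2 ^ mu2 k).
Proof.
move=> k_gt0; set c := k * (2 ^ k - 1).
have c_gt0 : 0 < c by rewrite muln_gt0 k_gt0 subn_gt0 -{1}(expn0 2) ltn_exp2l.
have c_ok : binsum c = k := binsum_candidate k_gt0.
have c_dvd : k %| c := dvdn_mulr _ (dvdnn k).
pose P b := [&& 0 < b, k %| b & binsum b == k].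
have exP : exists b, P b by exists c; rewrite /P c_gt0 c_dvd c_ok eqxx.
split.
  have [a /and3P [a_gt0 a_dvd /eqP a_sum] a_min] := ex_minnP exP.
  exists a; split=> // b b_gt0 b_dvd b_sum.
  by apply: a_min; rewrite /P b_gt0 b_dvd b_sum eqxx.
move=> a [_ _ a_sum a_min]; rewrite binsum_lower //=.
exact: leq_trans (a_min c c_gt0 c_dvd c_ok) (candidate_upper k_gt0).
Qed.
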